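(* Let $C$ be a closed cone with nonempty interior $\operatorname{int} C$ in a real Banach space $X$. If $f:\operatorname{int} C\to\operatorname{int} C$ is nonexpansive with respect to Thompson's metric $d_T$, then for every $0<\alpha<1$ the map $\alpha f+(1-\alpha)\operatorname{id}$ is also nonexpansive on $(\operatorname{int} C,d_T)$.
   Context: A closed cone is a closed convex set $C\subset X$ with $\lambda C\subseteq C$ for all $\lambda\ge 0$ and $C\cap(-C)=\{0\}$. It induces the partial order $x\le y$ iff $y-x\in C$. For $x,y\in C$, $M(x/y)=\inf\{\beta>0: x\le \beta y\}$. For $x,y\in\operatorname{int} C$, Thompson's metric is $d_T(x,y)=\log\max\{M(x/y),M(y/x)\}=\log\inf\{\beta\ge 1:\beta^{-1}x\le y\le \beta x\}$. A map $g$ is $d_T$-nonexpansive if $d_T(g(x),g(y))\le d_T(x,y)$ for all $x,y$. *)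

From HB Require Import structures.
From mathcomp Require Import all_boot all_order all_algebra.
From mathcomp Require Import all_classical all_reals all_analysis.
Set Implicit Arguments. Unset Strict Implicit. Unset Printing Implicit Defensive.
Import Order.TTheory GRing.Theory Num.Theory.
Import numFieldNormedType.Exports.
Local Open Scope classical_set_scope.
Local Open Scope ring_scope.

Definition closed_cone {R : realType} {X : normedModType R} (C : set X) : Prop :=
  [/\ closed C,
      (forall x y (t : R), C x -> C y -> 0 <= t -> t <= 1 -> C (t *: x + (1 - t) *: y)),
      (forall (l : R) x, 0 <= l -> C x -> C (l *: x)) &
      (forall x, C x -> C (- x) -> x = 0)].

Definition cone_le {R : realType} {X : normedModType R} (C : set X) (x y : X) : Prop :=
  C (y - x).

Definition coneM {R : realType} {X : normedModType R} (C : set X) (x y : X) : R :=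
  inf [set beta : R | 0 < beta /\ cone_le C x (beta *: y)].

Definition thompson {R : realType} {X : normedModType R} (C : set X) (x y : X) : R :=
  ln (Num.max (coneM C x y) (coneM C y x)).

From HB Require Import structures.
From mathcomp Require Import all_boot all_order all_algebra.
From mathcomp Require Import all_classical all_reals all_analysis.
From mathcomp Require Import ring lra.
Import Order.TTheory GRing.Theory Num.Theory.
Import numFieldNormedType.Exports.
Local Open Scope classical_set_scope.
Local Open Scope ring_scope.

(* The key fact is a joint quasi-convexity of the gauge M(./.): if
   x <= s y and x' <= s y' then a x + (1-a) x' <= s (a y + (1-a) y'),
   since C is a convex cone; hence
     M(a x + (1-a) x' / a y + (1-a) y') <= max (M(x/y), M(x'/y')),
   and taking the symmetric maximum and the (increasing) logarithm,
     d_T(a x + (1-a) x', a y + (1-a) y') <= max (d_T(x,y), d_T(x',y')).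
   Applied with x := f x, x' := x and y := f y, y' := y this gives the
   theorem, since d_T(f x, f y) <= d_T(x, y).

   The degenerate case where 0 is an
   interior point forces X = {0} and is handled separately. *)

Section ConeGauge.
Variables (R : realType) (X : normedModType R) (C : set X).
Hypothesis coneC : closed_cone C.

(* A convex cone is closed under addition: x + y = 2 ((1/2) x + (1/2) y). *)
Lemma cone_add x y : C x -> C y -> C (x + y).
Proof.
case: coneC => _ convC scaleC _ Cx Cy.
have Cmid : C (2^-1 *: x + (1 - 2^-1) *: y).
  by have := convC x y 2^-1 Cx Cy; apply; lra.
have -> : x + y = 2 *: (2^-1 *: x + (1 - 2^-1) *: y).
  rewrite scalerDr !scalerA mulfV ?pnatr_eq0 // scale1r.
  have -> : (2 * (1 - 2^-1) : R) = 1 by rewrite mulrBr mulr1 mulfV ?pnatr_eq0 //; lra.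
  by rewrite scale1r.
by apply: scaleC => //; lra.
Qed.

Lemma cone_scale (l : R) x : 0 <= l -> C x -> C (l *: x).
Proof. by case: coneC => _ _ scaleC _; apply: scaleC. Qed.

Lemma cone_pointed x : C x -> C (- x) -> x = 0.
Proof. by case: coneC => _ _ _; apply. Qed.

Lemma interior_sub x : C° x -> C x.
Proof. exact: nbhs_singleton. Qed.

Lemma interior_ball x :
  C° x -> exists2 e : R, 0 < e & forall z, `|x - z| < e -> C z.
Proof.
move=> /nbhs_ballP [e e0 ballC]; exists e => // z xz; apply: ballC.
by rewrite -ball_normE.
Qed.

Lemma interior_comb p q (a : R) : C° p -> C q -> 0 < a -> C° (a *: p + q).
Proof.
move=> /interior_ball [e e0 ballC] Cq a0.
apply/nbhs_ballP; exists (a * e); first exact: mulr_gt0.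
move=> z; rewrite -ball_normE /ball_ /= => near_z.
have -> : z = a *: (p - a^-1 *: (a *: p + q - z)) + q.
  rewrite scalerDr scalerN scalerA mulfV ?gt_eqF // scale1r.
  by rewrite opprB opprD !addrA (addrC (a *: p) z) addrK subrK.
apply: cone_add => //; apply: cone_scale; first exact: ltW.
apply: ballC; rewrite opprB addrC subrK normrZ gtr0_norm ?invr_gt0 //.
by rewrite ltr_pdivrMl.
Qed.

Lemma interior_convex x x' (a : R) : C° x -> C° x' -> 0 < a -> a < 1 ->
  C° (a *: x + (1 - a) *: x').
Proof.
move=> Cx Cx' a0 a1; apply: interior_comb => //.
by apply: cone_scale; [lra | exact: interior_sub].
Qed.

(* If 0 is interior, the pointed cone C contains a ball around 0 together
   with its opposite, so every vector vanishes. *)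
Lemma interior0_trivial : C° 0 -> forall v : X, v = 0.
Proof.
move=> /interior_ball [e e0 ballC] v.
have v1 : 0 < `|v| + 1 by rewrite ltr_wpDl.
set k := e / 2 / (`|v| + 1).
have k0 : 0 < k by rewrite /k !divr_gt0.
have small : `|k *: v| < e.
  rewrite normrZ gtr0_norm // /k mulrAC ltr_pdivrMr //.
  have := normr_ge0 v; nra.
have : k *: v = 0.
  by apply: cone_pointed; apply: ballC; rewrite sub0r ?opprK ?normrN.
by move/eqP; rewrite scaler_eq0 gt_eqF //= => /eqP.
Qed.

Local Notation gauge_set x y := [set beta : R | 0 < beta /\ cone_le C x (beta *: y)].

(* For y interior, x <= beta y for all large beta: y - s x lies in C as soon
   as s |x| is smaller than the radius of a ball around y inside C. *)
Lemma gauge_set_neq0 x y : C° y -> gauge_set x y !=set0.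
Proof.
move=> /interior_ball [e e0 ballC].
set s := e / (`|x| + 1).
have x1 : 0 < `|x| + 1 by rewrite ltr_wpDl.
have s0 : 0 < s by rewrite divr_gt0.
exists s^-1; split; first by rewrite invr_gt0.
rewrite /cone_le; have -> : s^-1 *: y - x = s^-1 *: (y - s *: x).
  by rewrite scalerBr scalerA mulVf ?gt_eqF // scale1r.
apply: cone_scale; first by rewrite invr_ge0 ltW.
apply: ballC; rewrite opprB addrC subrK normrZ gtr0_norm //.
by rewrite /s mulrAC ltr_pdivrMr // ltr_pM2l //; lra.
Qed.

Lemma coneM_ge0 x y : C° y -> 0 <= coneM C x y.
Proof.
move=> Cy; apply: lb_le_inf; first exact: gauge_set_neq0.
by move=> b [b0 _]; apply: ltW.
Qed.

(* Every b > M(x/y) dominates: x <= b y (the set is upward closed). *)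
Lemma cone_le_gt_coneM x y (b : R) :
  C° y -> coneM C x y < b -> cone_le C x (b *: y).
Proof.
move=> Cy Mb; have [s [s0 xs] sb] := inf_lt (gauge_set_neq0 x y Cy) Mb.
rewrite /cone_le (_ : b *: y - x = (b - s) *: y + (s *: y - x)).
  apply: cone_add => //; apply: cone_scale.
    by rewrite subr_ge0 ltW.
  exact: interior_sub.
by rewrite scalerBl addrA subrK.
Qed.

Lemma coneM_le x y (b : R) : 0 < b -> cone_le C x (b *: y) -> coneM C x y <= b.
Proof.
by move=> b0 xb; apply: ge_inf => //; exists 0 => z [z0 _]; apply: ltW.
Qed.

Lemma coneM_comb x y x' y' (a : R) : C° y -> C° y' -> 0 < a -> a < 1 ->
  coneM C (a *: x + (1 - a) *: x') (a *: y + (1 - a) *: y')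
  <= Num.max (coneM C x y) (coneM C x' y').
Proof.
move=> Cy Cy' a0 a1; apply/unstable.ler_gtP => t Mt.
have Mxy : coneM C x y < t by apply: le_lt_trans Mt; rewrite le_max lexx.
have Mxy' : coneM C x' y' < t by apply: le_lt_trans Mt; rewrite le_max lexx orbT.
have t0 : 0 < t by apply: le_lt_trans Mxy; apply: coneM_ge0.
apply: coneM_le => //; rewrite /cone_le.
have -> : t *: (a *: y + (1 - a) *: y') - (a *: x + (1 - a) *: x')
   = a *: (t *: y - x) + (1 - a) *: (t *: y' - x').
  rewrite !scalerBr !scalerDr !scalerA (mulrC t a) (mulrC t (1 - a)).
  by rewrite addrACA opprD.
by apply: cone_add; apply: cone_scale;
  try exact: cone_le_gt_coneM; lra.
Qed.

(* For interior x, y of a pointed cone with 0 not interior,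
   max(M(x/y), M(y/x)) >= 1: otherwise x <= t y and y <= t x with t < 1
   give -(x + y) in C, so x + y = 0 and then x = 0 is interior. *)
Lemma coneM_max_ge1 x y : ~ C° 0 -> C° x -> C° y ->
  1 <= Num.max (coneM C x y) (coneM C y x).
Proof.
move=> not0 Cx Cy; rewrite leNgt; apply/negP => m1.
set m := Num.max _ _ in m1; set t := (m + 1) / 2.
have mt : m < t by rewrite /t; lra.
have t1 : t < 1 by rewrite /t; lra.
have xy : C (t *: y - x).
  by apply: cone_le_gt_coneM => //; apply: le_lt_trans mt; rewrite le_max lexx.
have yx : C (t *: x - y).
  by apply: cone_le_gt_coneM => //; apply: le_lt_trans mt; rewrite le_max lexx orbT.
have Cneg : C (- (x + y)).
  have sum : (t *: y - x) + (t *: x - y) = (t - 1) *: (x + y).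
    by rewrite scalerBl scale1r scalerDr addrACA opprD (addrC (t *: y)).
  have -> : - (x + y) = (1 - t)^-1 *: ((t *: y - x) + (t *: x - y)).
    rewrite sum scalerA -[t - 1]opprB mulrN mulVf ?subr_eq0 ?gt_eqF //.
    by rewrite scaleN1r.
  by apply: cone_scale; [rewrite invr_ge0 subr_ge0 ltW | exact: cone_add].
have xy0 : x + y = 0.
  by apply: cone_pointed => //; apply: cone_add; exact: interior_sub.
have x0 : x = 0.
  apply: cone_pointed; first exact: interior_sub.
  have -> : - x = y by apply/eqP; rewrite eq_sym -subr_eq0 opprK addrC xy0.
  exact: interior_sub.
by apply: not0; rewrite -x0.
Qed.

Lemma thompson_comb x y x' y' (a : R) : C° x -> C° y -> C° x' -> C° y' ->
  0 < a -> a < 1 ->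
  thompson C (a *: x + (1 - a) *: x') (a *: y + (1 - a) *: y')
  <= Num.max (thompson C x y) (thompson C x' y').
Proof.
move=> Cx Cy Cx' Cy' a0 a1.
have [/interior0_trivial all0|not0] := pselect (C° (0 : X)).
  rewrite (all0 (a *: x + _)) (all0 (a *: y + _)) (all0 x) (all0 y).
  by rewrite le_max lexx.
have pos (r : R) : 1 <= r -> r \in Num.pos by rewrite posrE; lra.
rewrite /thompson.
set mu := Num.max _ _; set m := Num.max (coneM C x y) _.
set m' := Num.max (coneM C x' y') _.
have mu_le : mu <= Num.max m m'.
  rewrite ge_max; apply/andP; split;
    [apply: le_trans (coneM_comb x y x' y' a Cy Cy' a0 a1) _
    |apply: le_trans (coneM_comb y x y' x' a Cx Cx' a0 a1) _];
    by rewrite ge_max !le_max !lexx /= ?orbT.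
have mu1 : 1 <= mu.
  by apply: coneM_max_ge1 => //; exact: interior_convex.
have m1 : 1 <= m by exact: coneM_max_ge1.
have m1' : 1 <= m' by exact: coneM_max_ge1.
rewrite le_max !ler_ln ?pos //.
by move: mu_le; rewrite le_max.
Qed.

End ConeGauge.
Arguments interior_convex {R X C} coneC {x x' a}.
Arguments thompson_comb {R X C} coneC {x y x' y' a}.

Theorem lemma2p1 (R : realType) (X : completeNormedModType R) (C : set X)
  (f : X -> X) :
  closed_cone C ->
  C° !=set0 ->
  (forall x, C° x -> C° (f x)) ->
  (forall x y, C° x -> C° y -> thompson C (f x) (f y) <= thompson C x y) ->
  forall alpha : R, 0 < alpha -> alpha < 1 ->
    (forall x, C° x -> C° (alpha *: f x + (1 - alpha) *: x)) /\
    (forall x y, C° x -> C° y ->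
       thompson C (alpha *: f x + (1 - alpha) *: x)
                  (alpha *: f y + (1 - alpha) *: y) <= thompson C x y).
Proof.
move=> coneC _ f_int f_nonexp alpha a0 a1; split=> [x Cx | x y Cx Cy].
  by apply: (interior_convex coneC) => //; exact: f_int.
have comb := thompson_comb coneC (f_int x Cx) (f_int y Cy) Cx Cy a0 a1.
apply: (le_trans comb).
by rewrite ge_max f_nonexp // lexx.
Qed.
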